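(* For a topological space $X$ let $F_X$ be the right $\Lambda$ $\mathsf{Com}$-module with $F_X(r)=X^{\times r}$ ($r\ge1$), $\Lambda$-operations $\mu_j(x_1,\dots,x_r)=(x_1,\dots,\widehat{x_j},\dots,x_r)$, and right $\mathsf{Com}$-action induced by diagonals (e.g. the binary product acting in the first slot sends $(x_1,\dots,x_r)\mapsto(x_1,x_1,x_2,\dots,x_r)$). Then $X\mapsto F_X$ is right adjoint to the functor $U:\Lambda\mathcal{M}od_{\mathsf{Com}}\to\mathrm{Top}$, $U(\mathcal{M})=\mathcal{M}(1)$: \[U:\Lambda\mathcal{M}od_{\mathsf{Com}}\rightleftarrows\mathrm{Top}:F.\] The same holds with simplicial sets in place of topological spaces.
   Context: $\mathsf{Com}$ is the operad with $\mathsf{Com}(r)$ a point for $r\ge1$ and no arity zero operation. A right $\Lambda$ $\mathsf{Com}$-module is a right $\mathsf{Com}$-module $\mathcal{M}$ with $\mathcal{M}(0)=\emptyset$ equipped with maps $\mu_j:\mathcal{M}(r)\to\mathcal{M}(r-1)$ ($r\ge2$, $1\le j\le r$) such that setting $\mathcal{M}_*(0)=*$, $\mathcal{M}_*(r)=\mathcal{M}(r)$ defines a right module over $\mathsf{Com}_*$ (which has $\mathsf{Com}_*(0)=*$), the $\mu_j$ being the action of the nullary operation in slot $j$. $\Lambda\mathcal{M}od_{\mathsf{Com}}$ is the category of such modules. *)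

From HB Require Import structures.
From mathcomp Require Import all_boot all_order.
From mathcomp Require Import boolp classical_sets topology function_spaces.

Set Implicit Arguments.
Unset Strict Implicit.
Unset Printing Implicit Defensive.

Local Open Scope classical_set_scope.

(* A right Lambda Com-module M (M(0) = empty, M_*(0) = * ) is encoded by its *)
(* equivalent standard presentation as a contravariant functor from the      *)
(* category of nonempty finite sets [r] = {1..r} (r >= 1) and ALL maps:      *)
(*  - a bijection [r] -> [r] acts as the right Sigma_r action,               *)
(*  - the surjection [r+k-1] -> [r] collapsing {i..i+k-1} onto i acts as the *)
(*    right action of the k-ary operation of Com in slot i (k >= 1),         *)
(*  - the order preserving injection [r-1] -> [r] skipping j acts as mu_j    *)
(*    (action of the nullary operation of Com_* in slot j).                  *)
(* The arity-(r+1) component is the field at index r, and [r+1] is 'I_r.+1.  *)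
(* Hence U(M) = M(1) is the component at index 0.                            *)

Record LModTop := {
  lt_obj : nat -> topologicalType;
  lt_act : forall r s, ('I_r.+1 -> 'I_s.+1) -> lt_obj s -> lt_obj r;
  lt_cont : forall r s (f : 'I_r.+1 -> 'I_s.+1), continuous (lt_act f);
  lt_id : forall r (x : lt_obj r), lt_act (fun i => i) x = x;
  lt_comp : forall r s t (f : 'I_r.+1 -> 'I_s.+1) (g : 'I_s.+1 -> 'I_t.+1) x,
      lt_act f (lt_act g x) = lt_act (fun i => g (f i)) x
}.

Record LHomTop (M N : LModTop) := {
  lht_fun : forall r, lt_obj M r -> lt_obj N r;
  lht_cont : forall r, continuous (@lht_fun r);
  lht_nat : forall r s (f : 'I_r.+1 -> 'I_s.+1) x,
      lht_fun (lt_act f x) = lt_act f (lht_fun x)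
}.

Lemma ptws_cont (I : Type) (X T : topologicalType) (g : T -> {ptws I -> X}) :
  (forall i, continuous (fun t => g t i)) -> continuous g.
Proof.
move=> cg t; apply/cvg_sup => i.
move=> U /= [? [[W oW <-]]] /= Wgt /filterS; apply.
exact: (cg i t _ (open_nbhs_nbhs (conj oW Wgt))).
Qed.

(* F_X(r+1) = X^(r+1) with the product topology; a map f : [r] -> [s] acts  *)
(* by (x_1..x_s) |-> (x_f(1) .. x_f(r)): deletion of coordinates (mu_j),    *)
(* diagonals (Com action), permutations (Sigma action).                     *)
Definition FTop_act (X : topologicalType) r s (f : 'I_r.+1 -> 'I_s.+1)
  (x : {ptws 'I_s.+1 -> X}) : {ptws 'I_r.+1 -> X} := fun i => x (f i).

Lemma FTop_cont (X : topologicalType) r s (f : 'I_r.+1 -> 'I_s.+1) :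
  continuous (@FTop_act X r s f).
Proof.
apply: ptws_cont => i; exact: (@proj_continuous _ (fun _ : 'I_s.+1 => X) (f i)).
Qed.

Definition FTop (X : topologicalType) : LModTop :=
  {| lt_obj := fun r => {ptws 'I_r.+1 -> X};
     lt_act := @FTop_act X;
     lt_cont := @FTop_cont X;
     lt_id := fun r x => erefl;
     lt_comp := fun r s t f g x => erefl |}.

Definition DeltaMap (m n : nat) :=
  {f : 'I_m.+1 -> 'I_n.+1 | forall i j : 'I_m.+1, (i <= j)%N -> (f i <= f j)%N}.

Definition delta_id (n : nat) : DeltaMap n n :=
  @exist _ (fun f : 'I_n.+1 -> 'I_n.+1 => forall i j : 'I_n.+1, (i <= j)%N -> (f i <= f j)%N)
    (fun i => i) (fun i j h => h).

Definition delta_comp m n p (f : DeltaMap m n) (g : DeltaMap n p) : DeltaMap m p :=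
  @exist _ (fun h : 'I_m.+1 -> 'I_p.+1 => forall i j : 'I_m.+1, (i <= j)%N -> (h i <= h j)%N)
    (fun i => proj1_sig g (proj1_sig f i))
    (fun i j h => proj2_sig g _ _ (proj2_sig f i j h)).

Record sSet := {
  ss_obj : nat -> Type;
  ss_act : forall m n, DeltaMap m n -> ss_obj n -> ss_obj m;
  ss_id : forall n (x : ss_obj n), ss_act (delta_id n) x = x;
  ss_comp : forall m n p (f : DeltaMap m n) (g : DeltaMap n p) x,
      ss_act f (ss_act g x) = ss_act (delta_comp f g) x
}.

Record sMap (X Y : sSet) := {
  sm_fun : forall n, ss_obj X n -> ss_obj Y n;
  sm_nat : forall m n (f : DeltaMap m n) x,
      sm_fun (ss_act f x) = ss_act f (sm_fun x)
}.

Record LModS := {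
  ls_obj : nat -> sSet;
  ls_act : forall r s, ('I_r.+1 -> 'I_s.+1) -> sMap (ls_obj s) (ls_obj r);
  ls_id : forall r n (x : ss_obj (ls_obj r) n),
      sm_fun (ls_act (fun i : 'I_r.+1 => i)) x = x;
  ls_comp : forall r s t (f : 'I_r.+1 -> 'I_s.+1) (g : 'I_s.+1 -> 'I_t.+1) n x,
      sm_fun (ls_act f) (sm_fun (ls_act g) (n := n) x)
      = sm_fun (ls_act (fun i => g (f i))) x
}.

Record LHomS (M N : LModS) := {
  lhs_fun : forall r, sMap (ls_obj M r) (ls_obj N r);
  lhs_nat : forall r s (f : 'I_r.+1 -> 'I_s.+1) n x,
      sm_fun (lhs_fun r) (sm_fun (ls_act M f) (n := n) x)
      = sm_fun (ls_act N f) (sm_fun (lhs_fun s) x)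
}.

Definition spow_obj (X : sSet) (r : nat) (n : nat) := 'I_r.+1 -> ss_obj X n.

Definition spow_act (X : sSet) r m n (f : DeltaMap m n) (x : spow_obj X r n) :
  spow_obj X r m := fun i => ss_act f (x i).

Lemma spow_id (X : sSet) r n (x : spow_obj X r n) : spow_act (delta_id n) x = x.
Proof. by apply: funext => i; rewrite /spow_act ss_id. Qed.

Lemma spow_comp (X : sSet) r m n p (f : DeltaMap m n) (g : DeltaMap n p)
  (x : spow_obj X r p) : spow_act f (spow_act g x) = spow_act (delta_comp f g) x.
Proof. by apply: funext => i; rewrite /spow_act ss_comp. Qed.

Definition spow (X : sSet) (r : nat) : sSet :=
  {| ss_obj := spow_obj X r; ss_act := @spow_act X r;
     ss_id := @spow_id X r; ss_comp := @spow_comp X r |}.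

Definition FS_act (X : sSet) r s (f : 'I_r.+1 -> 'I_s.+1) : sMap (spow X s) (spow X r) :=
  {| sm_fun := fun n (x : ss_obj (spow X s) n) =>
        ((fun i => x (f i)) : spow_obj X r n) : ss_obj (spow X r) n;
     sm_nat := fun m n g x => erefl |}.

Definition FS (X : sSet) : LModS :=
  {| ls_obj := spow X; ls_act := @FS_act X;
     ls_id := fun r n x => erefl;
     ls_comp := fun r s t f g n x => erefl |}.

From HB Require Import structures.
From mathcomp Require Import all_boot all_order.
From mathcomp Require Import boolp classical_sets topology function_spaces.

(* A morphism f : M -> F_X is determined by its arity-one component: by
   naturality with respect to the map [1] -> [r] picking the slot i, the i-th
   coordinate of f_r(x) is f_1 applied to the restriction of x to slot i.
   Conversely, any map g : M(1) -> X defines f_r(x) := (g (x|_i))_i, which is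
   natural because the action of M is functorial; continuity (resp.
   simplicial structure) is preserved coordinatewise. *)

Definition ord_pick {r} (i : 'I_r.+1) : 'I_1 -> 'I_r.+1 := fun=> i.

Lemma ord_pick0 : @ord_pick 0 ord0 = id.
Proof. by apply: funext => i; rewrite [i]ord1. Qed.

Lemma LHomTop_ext M N (f g : LHomTop M N) :
  (forall r x, @lht_fun _ _ f r x = @lht_fun _ _ g r x) -> f = g.
Proof.
case: f g => [f1 f2 f3] [g1 g2 g3] /= efg.
have ef : f1 = g1.
  by apply: functional_extensionality_dep => r; apply: funext; exact: efg.
by subst; congr Build_LHomTop; exact: Prop_irrelevance.
Qed.

Lemma sMap_ext X Y (f g : sMap X Y) :
  (forall n x, @sm_fun _ _ f n x = @sm_fun _ _ g n x) -> f = g.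
Proof.
case: f g => [f1 f2] [g1 g2] /= efg.
have ef : f1 = g1.
  by apply: functional_extensionality_dep => n; apply: funext; exact: efg.
by subst; congr Build_sMap; exact: Prop_irrelevance.
Qed.

Lemma LHomS_ext M N (f g : LHomS M N) :
  (forall r, @lhs_fun _ _ f r = @lhs_fun _ _ g r) -> f = g.
Proof.
case: f g => [f1 f2] [g1 g2] /= efg.
have ef : f1 = g1 by apply: functional_extensionality_dep.
by subst; congr Build_LHomS; exact: Prop_irrelevance.
Qed.

Section TopAdjunction.
Variables (M : LModTop) (X : topologicalType).

Lemma LHomTop_coord (f : LHomTop M (FTop X)) r (x : lt_obj M r) i :
  lht_fun f x i = lht_fun f (lt_act (ord_pick i) x) ord0.
Proof. by rewrite lht_nat. Qed.

Definition transposeT_fun (f : LHomTop M (FTop X)) (x : lt_obj M 0) : X :=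
  lht_fun f x ord0.

Lemma transposeT_cont f : continuous (transposeT_fun f).
Proof.
move=> x; exact: (continuous_comp (@lht_cont _ _ f 0 x)
  (@proj_continuous _ (fun=> X) ord0 _)).
Qed.

Definition transposeT f : {g : lt_obj M 0 -> X | continuous g} :=
  exist _ (transposeT_fun f) (transposeT_cont f).

Definition untransposeT_fun (g : {g : lt_obj M 0 -> X | continuous g}) {r}
  (x : lt_obj M r) : lt_obj (FTop X) r :=
  fun i => sval g (lt_act (ord_pick i) x).

Lemma untransposeT_cont g r : continuous (@untransposeT_fun g r).
Proof.
apply: ptws_cont => i x; apply: continuous_comp; first exact: lt_cont.
exact: (svalP g).
Qed.

Lemma untransposeT_nat g r s (f : 'I_r.+1 -> 'I_s.+1) x :
  untransposeT_fun g (lt_act f x) = lt_act f (untransposeT_fun g x).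
Proof. by apply: funext => i; rewrite /untransposeT_fun lt_comp. Qed.

Definition untransposeT g : LHomTop M (FTop X) :=
  {| lht_fun := @untransposeT_fun g; lht_cont := @untransposeT_cont g;
     lht_nat := @untransposeT_nat g |}.

Lemma transposeTK : cancel transposeT untransposeT.
Proof.
move=> f; apply: LHomTop_ext => r x; apply: funext => i.
by rewrite [RHS]LHomTop_coord.
Qed.

Lemma untransposeTK : cancel untransposeT transposeT.
Proof.
move=> [g cg]; apply: eq_exist; apply: funext => x.
by rewrite /= /transposeT_fun /untransposeT_fun ord_pick0 lt_id.
Qed.

Lemma transposeT_bij : bijective transposeT.
Proof. exact: Bijective transposeTK untransposeTK. Qed.

End TopAdjunction.

Section SSetAdjunction.
Variables (M : LModS) (X : sSet).

Lemma LHomS_coord (f : LHomS M (FS X)) r n (x : ss_obj (ls_obj M r) n) i :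
  sm_fun (lhs_fun f r) x i
  = sm_fun (lhs_fun f 0) (sm_fun (ls_act M (ord_pick i)) x) ord0.
Proof. by rewrite lhs_nat. Qed.

Definition transposeS_fun (f : LHomS M (FS X)) {n} (x : ss_obj (ls_obj M 0) n)
  : ss_obj X n :=
  sm_fun (lhs_fun f 0) x ord0.

Lemma transposeS_nat f m n (d : DeltaMap m n) x :
  transposeS_fun f (ss_act d x) = ss_act d (transposeS_fun f x).
Proof. by rewrite /transposeS_fun sm_nat. Qed.

Definition transposeS f : sMap (ls_obj M 0) X :=
  {| sm_fun := @transposeS_fun f; sm_nat := @transposeS_nat f |}.

Definition untransposeS_fun (g : sMap (ls_obj M 0) X) {r n}
  (x : ss_obj (ls_obj M r) n) : ss_obj (spow X r) n :=
  fun i => sm_fun g (sm_fun (ls_act M (ord_pick i)) x).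

Lemma untransposeS_simplicial g r m n (d : DeltaMap m n) x :
  untransposeS_fun g (ss_act d x) = ss_act d (@untransposeS_fun g r n x).
Proof. by apply: funext => i; rewrite /untransposeS_fun /= /spow_act !sm_nat. Qed.

Definition untransposeS_map g r : sMap (ls_obj M r) (ls_obj (FS X) r) :=
  {| sm_fun := @untransposeS_fun g r; sm_nat := @untransposeS_simplicial g r |}.

Lemma untransposeS_nat g r s (f : 'I_r.+1 -> 'I_s.+1) n x :
  sm_fun (untransposeS_map g r) (sm_fun (ls_act M f) (n := n) x)
  = sm_fun (ls_act (FS X) f) (sm_fun (untransposeS_map g s) x).
Proof. by apply: funext => i; rewrite /= /untransposeS_fun ls_comp. Qed.

Definition untransposeS g : LHomS M (FS X) :=
  {| lhs_fun := @untransposeS_map g; lhs_nat := @untransposeS_nat g |}.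

Lemma transposeSK : cancel transposeS untransposeS.
Proof.
move=> f; apply: LHomS_ext => r; apply: sMap_ext => n x; apply: funext => i.
by rewrite [RHS]LHomS_coord.
Qed.

Lemma untransposeSK : cancel untransposeS transposeS.
Proof.
move=> g; apply: sMap_ext => n x.
by rewrite /= /transposeS_fun /= /untransposeS_fun ord_pick0 ls_id.
Qed.

Lemma transposeS_bij : bijective transposeS.
Proof. exact: Bijective transposeSK untransposeSK. Qed.

End SSetAdjunction.

Theorem lemma4p1 :
  (exists Phi : forall (M : LModTop) (X : topologicalType),
       LHomTop M (FTop X) -> {g : lt_obj M 0 -> X | continuous g},
     (forall M X, bijective (Phi M X)) /\
     (forall (M M' : LModTop) (X Y : topologicalType)
        (h : LHomTop M' M) (g : X -> Y), continuous g ->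
      forall (f : LHomTop M (FTop X)) (f' : LHomTop M' (FTop Y)),
        (forall r (x : lt_obj M' r),
            lht_fun f' x = (fun i => g (lht_fun f (lht_fun h x) i))) ->
        forall x : lt_obj M' 0,
          proj1_sig (Phi M' Y f') x = g (proj1_sig (Phi M X f) (lht_fun h x))))
  /\
  (exists Phi : forall (M : LModS) (X : sSet),
       LHomS M (FS X) -> sMap (ls_obj M 0) X,
     (forall M X, bijective (Phi M X)) /\
     (forall (M M' : LModS) (X Y : sSet)
        (h : LHomS M' M) (g : sMap X Y)
        (f : LHomS M (FS X)) (f' : LHomS M' (FS Y)),
        (forall r n (x : ss_obj (ls_obj M' r) n),
            sm_fun (lhs_fun f' r) x
            = (fun i => sm_fun g (sm_fun (lhs_fun f r) (sm_fun (lhs_fun h r) x) i))) ->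
        forall n (x : ss_obj (ls_obj M' 0) n),
          sm_fun (Phi M' Y f') x
          = sm_fun g (sm_fun (Phi M X f) (sm_fun (lhs_fun h 0) x)))).
Proof.
split.
- exists transposeT; split; first exact: transposeT_bij.
  by move=> M M' X Y h g _ f f' ef' x /=; rewrite /transposeT_fun ef'.
- exists transposeS; split; first exact: transposeS_bij.
  by move=> M M' X Y h g f f' ef' n x /=; rewrite /transposeS_fun ef'.
Qed.
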